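(* Let $\mathbf{C}$ be a covering of a finite nonempty set $U$. Then $\mathbf{C}$ is an invariable covering if and only if every $x\in U$ has a core block in $\mathbf{C}$ and every $K\in\mathbf{C}$ is the core block of at least one element of $U$.
   Context: A covering of $U$ is a family (set) $\mathbf{C}$ of subsets of $U$ with $\emptyset\notin\mathbf{C}$ and $\bigcup\mathbf{C}=U$; its elements are called blocks. The membership repeat degree of $x\in U$ is $\partial(x)=|\{K\in\mathbf{C}: x\in K\}|$. The common block repeat degree of $(x,y)\in U\times U$ is $\lambda(x,y)=|\{K\in\mathbf{C}: \{x,y\}\subseteq K\}|$. A block $K\in\mathbf{C}$ is a core block of $x\in U$ if $x\in K$ and $\lambda(x,y)=\partial(x)$ for every $y\in K$. A block $K\in\mathbf{C}$ is a reducible element of $\mathbf{C}$ if $K$ is the union of some subfamily of $\mathbf{C}\setminus\{K\}$; otherwise it is irreducible. $\mathbf{C}$ is irreducible if all its blocks are irreducible elements. $\mathbf{C}$ is an invariable covering if $\mathbf{C}$ is irreducible and every $x\in U$ has a core block in $\mathbf{C}$. *)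

From mathcomp Require Import all_boot.
Set Implicit Arguments. Unset Strict Implicit. Unset Printing Implicit Defensive.

Section Coverings.
Variable T : finType.

Definition is_covering (U : {set T}) (C : {set {set T}}) : Prop :=
  set0 \notin C /\ cover C = U.

Definition mrd (C : {set {set T}}) (x : T) : nat := #|[set K in C | x \in K]|.

Definition cbrd (C : {set {set T}}) (x y : T) : nat :=
  #|[set K in C | (x \in K) && (y \in K)]|.

Definition core_block (C : {set {set T}}) (x : T) (K : {set T}) : Prop :=
  K \in C /\ x \in K /\ forall y, y \in K -> cbrd C x y = mrd C x.

Definition reducible_elem (C : {set {set T}}) (K : {set T}) : Prop :=
  K \in C /\ exists F : {set {set T}}, F \subset C :\ K /\ cover F = K.

Definition irreducible_cov (C : {set {set T}}) : Prop :=
  forall K, K \in C -> ~ reducible_elem C K.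

Definition invariable_covering (U : {set T}) (C : {set {set T}}) : Prop :=
  irreducible_cov C /\ forall x, x \in U -> exists K, core_block C x K.

End Coverings.

From mathcomp Require Import all_boot.
Set Implicit Arguments. Unset Strict Implicit. Unset Printing Implicit Defensive.

(* The repeat-degree condition defining a core block is a
   counting disguise of an inclusion: lambda(x,y) = d(x) says exactly that y
   lies in every block containing x.  Hence K is a core block of x iff K is a
   block containing x and contained in every block containing x, i.e. K is the
   least block through x.  With this description both directions follow:
   - a block K that is the least block through some x is irreducible, since in
     any family of blocks covering K, the block through x must contain K;
   - if every element of K has a core block but K is the core block of none
     of them, then the blocks of C \ {K} contained in K already cover K
     (each y in K is covered by its own core block), so K is reducible.
   The theorem then combines these two facts for each block of C; of the
   covering hypotheses only "the union of the blocks is U" is used. *)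

Section CoreBlocks.
Variables (T : finType) (C : {set {set T}}).

Lemma cbrd_eq_mrd x y :
  cbrd C x y = mrd C x <-> (forall L, L \in C -> x \in L -> y \in L).
Proof.
have sub_xy : [set L in C | (x \in L) && (y \in L)] \subset [set L in C | x \in L].
  by apply/subsetP => L; rewrite !inE => /andP[-> /andP[-> _]].
split=> [eq_deg L LC xL | through_y].
- have : [set L in C | (x \in L) && (y \in L)] == [set L in C | x \in L].
    by rewrite eqEcard sub_xy /= -/(cbrd C x y) -/(mrd C x) eq_deg.
  by move/eqP/setP/(_ L); rewrite !inE LC xL /= => ->.
- apply: eq_card => L; rewrite !inE.
  by case LC: (L \in C); case xL: (x \in L); rewrite //= through_y.
Qed.

Lemma core_blockE x K :
  core_block C x K <->
  [/\ K \in C, x \in K & forall L, L \in C -> x \in L -> K \subset L].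
Proof.
split=> [[KC [xK core]] | [KC xK least]].
- split=> // L LC xL; apply/subsetP => y yK.
  by have /cbrd_eq_mrd := core y yK; apply.
- do 2!split=> //; move=> y yK; apply/cbrd_eq_mrd => L LC xL.
  exact: subsetP (least L LC xL) y yK.
Qed.

Lemma core_block_irreducible x K : core_block C x K -> ~ reducible_elem C K.
Proof.
case/core_blockE=> _ xK least [_ [F [sFC coverF]]].
move: xK; rewrite -coverF => /bigcupP[L LF xL].
have /setD1P[neLK LC] := subsetP sFC L LF.
have sLK : L \subset K by rewrite -coverF; apply: bigcup_sup.
by move: neLK; rewrite eqEsubset sLK least.
Qed.

Lemma not_core_block_reducible K :
  K \in C ->
  (forall y, y \in K -> exists L, core_block C y L) ->
  (forall y, y \in K -> ~ core_block C y K) ->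
  reducible_elem C K.
Proof.
move=> KC has_core not_core; split=> //.
exists [set L in C :\ K | L \subset K]; split.
  by apply/subsetP => L; rewrite inE => /andP[].
apply/eqP; rewrite eqEsubset; apply/andP; split.
  by apply/bigcupsP => L; rewrite inE => /andP[].
apply/subsetP => y yK; have [L coreL] := has_core y yK.
have /core_blockE[LC yL least] := coreL.
apply/bigcupP; exists L => //; rewrite !inE LC (least K KC yK) !andbT.
by apply/eqP => eqLK; apply: (not_core y yK); rewrite -eqLK.
Qed.

End CoreBlocks.

Theorem proposition22 (T : finType) (U : {set T}) (C : {set {set T}}) :
  U != set0 ->
  is_covering U C ->
  (invariable_covering U C <->
   ((forall x, x \in U -> exists K, core_block C x K) /\
    (forall K, K \in C -> exists2 x, x \in U & core_block C x K))).
Proof.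
move=> _ [_ coverC]; split=> [[irrC has_core] | [has_core core_of]].
- split=> // K KC.
  have KU y : y \in K -> y \in U by rewrite -coverC => yK; apply/bigcupP; exists K.
  have [/exists_inP[x xK leastK] | no_core] :=
    boolP [exists x in K, [forall L in C, (x \in L) ==> (K \subset L)]].
  + exists x; first exact: KU.
    by apply/core_blockE; split=> // L LC; apply/implyP/(forall_inP leastK).
  + exfalso; apply: (irrC K KC); apply: not_core_block_reducible => // y yK.
      exact: has_core (KU y yK).
    case/core_blockE=> _ _ least; case/exists_inP: no_core; exists y => //.
    by apply/forall_inP => L LC; apply/implyP/least.
- split=> // K KC; have [x _ coreK] := core_of K KC.
  exact: core_block_irreducible coreK.
Qed.
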